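(* If $G$ is a $K_t$-minor-free graph of diameter $d$ and order $n$, with a resolving set of size $k$, then $n\leq (dk+1)^{t-1}+1$.
   Context: A set $R$ of vertices of a graph $G$ is a resolving set if for each pair $u,v$ of distinct vertices there is $x\in R$ with $d(x,u)\neq d(x,v)$. A graph is $K_t$-minor-free if the complete graph $K_t$ is not a minor of it. *)

From mathcomp Require Import all_boot.
Set Implicit Arguments. Unset Strict Implicit. Unset Printing Implicit Defensive.

Section Graph.
Variables (T : finType) (e : rel T).

Definition simple_graph : Prop := symmetric e /\ irreflexive e.

Definition connected_graph : Prop := forall x y : T, connect e x y.

Definition walk_of_len (k : nat) (x y : T) : bool :=
  [exists p : k.-tuple T, path e x p && (last x p == y)].

(* graph distance d(x,y): length of a shortest x-y path (meaningful when
   G is connected; a shortest path has fewer than #|T| edges) *)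
Definition dist (x y : T) : nat :=
  find (fun k => walk_of_len k x y) (iota 0 #|T|).

Definition has_diameter (d : nat) : Prop :=
  connected_graph /\ (forall x y, dist x y <= d) /\ (exists x y, dist x y = d).

Definition resolving (R : {set T}) : Prop :=
  forall u v : T, u != v -> exists2 x, x \in R & dist x u != dist x v.

Definition induced (B : {set T}) : rel T :=
  [rel a b | [&& a \in B, b \in B & e a b]].

Definition has_Kt_minor (t : nat) : Prop :=
  exists B : 'I_t -> {set T},
    [/\ forall i, B i != set0,
        forall i, forall x y, x \in B i -> y \in B i -> connect (induced (B i)) x y,
        forall i j, i != j -> [disjoint B i & B j] &
        forall i j, i != j -> exists x y, [/\ x \in B i, y \in B j & e x y]].

End Graph.

From mathcomp Require Import all_boot zify.
Set Implicit Arguments. Unset Strict Implicit. Unset Printing Implicit Defensive.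

(* Encode a vertex v by its pattern {(x, i) in R x [0, d) | d(x, v) <= i}, a
   subset of a set of size dk; since R is resolving, distinct vertices have
   distinct patterns, so by Pajor's lemma the patterns shatter at least n sets.
   If they shattered t pairs (c_1, r_1), ..., (c_t, r_t), any two of the balls
   B(c_i, r_i) would share a vertex lying in no other ball, and the Voronoi
   cells of the centres for the "distance" d(c_i, y) - r_i would be connected,
   pairwise adjacent branch sets of a K_t minor.  So every shattered set has
   fewer than t elements, and there are at most (dk + 1)^(t - 1) of them. *)

Section Distance.
Variables (T : finType) (e : rel T).
Implicit Types (x y z : T) (k : nat).

Lemma dist_le_walk k x y : walk_of_len e k x y -> dist e x y <= k.
Proof.
move=> wk; rewrite /dist; set P := fun k => walk_of_len e k x y.
have size_find := find_size P (iota 0 #|T|); rewrite size_iota in size_find.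
rewrite leqNgt; apply/negP => lt_k_find.
have k_lt_T : k < #|T| by apply: leq_trans lt_k_find size_find.
by have := before_find 0 lt_k_find; rewrite nth_iota // add0n /P wk.
Qed.

Lemma walk_of_len_cat m n x y z :
  walk_of_len e m x y -> walk_of_len e n y z -> walk_of_len e (m + n) x z.
Proof.
move=> /existsP[p /andP[p_path /eqP p_last]] /existsP[q /andP[q_path /eqP q_last]].
apply/existsP; exists [tuple of p ++ q].
by rewrite cat_path p_path /= last_cat p_last q_path q_last eqxx.
Qed.

Lemma walk_of_len1 x y : e x y -> walk_of_len e 1 x y.
Proof. by move=> exy; apply/existsP; exists [tuple y] => /=; rewrite exy eqxx. Qed.

Lemma walk_of_len0 x : walk_of_len e 0 x x.
Proof. by apply/existsP; exists [tuple] => /=. Qed.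

Lemma walk_of_len0_eq x y : walk_of_len e 0 x y -> x = y.
Proof. by move=> /existsP[p]; rewrite tuple0 /= => /eqP. Qed.

Lemma walk_of_lenS k x y :
  walk_of_len e k.+1 x y -> exists2 y', walk_of_len e k x y' & e y' y.
Proof.
move=> /existsP[[s size_s]] /=; move: size_s; case/lastP: s => [|q z] //.
rewrite size_rcons eqSS rcons_path last_rcons => size_q /andP[/andP[q_path eqz] /eqP <-].
exists (last x q) => //; apply/existsP; exists (Tuple size_q) => /=.
by rewrite q_path eqxx.
Qed.

Lemma walk_of_len_connect k x y : walk_of_len e k x y -> connect e x y.
Proof. by move=> /existsP[p /andP[p_path /eqP <-]]; apply/connectP; exists p. Qed.

Lemma dist_walk x y : connect e x y -> walk_of_len e (dist e x y) x y.
Proof.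
move=> /connectP[p p_path ->]; case: (shortenP p_path) => q q_path q_uniq _.
have size_q : size q < #|T|.
  by move/card_uniqP: q_uniq => /= <-; exact: max_card.
set P := fun k => walk_of_len e k x (last x q).
have has_P : has P (iota 0 #|T|).
  apply/hasP; exists (size q); first by rewrite mem_iota.
  by apply/existsP; exists (Tuple (eqxx (size q))) => /=; rewrite q_path eqxx.
have := has_P; rewrite has_find size_iota => find_lt.
by have := nth_find 0 has_P; rewrite nth_iota ?add0n.
Qed.

Lemma dist_triangle x y z :
  connect e x y -> connect e y z -> dist e x z <= dist e x y + dist e y z.
Proof.
by move=> cxy cyz; apply/dist_le_walk/walk_of_len_cat; apply: dist_walk.
Qed.

Lemma dist_edge x y z : connect e x y -> e y z -> dist e x z <= dist e x y + 1.
Proof.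
by move=> cxy eyz; apply/dist_le_walk/walk_of_len_cat/walk_of_len1/eyz/dist_walk.
Qed.

Lemma distxx x : dist e x x = 0.
Proof. by apply/eqP; rewrite -leqn0; apply/dist_le_walk/walk_of_len0. Qed.

Lemma dist0_eq x y : connect e x y -> dist e x y = 0 -> x = y.
Proof. by move=> cxy dxy0; have := dist_walk cxy; rewrite dxy0 => /walk_of_len0_eq. Qed.

Lemma dist_predecessor x y n :
  connect e x y -> dist e x y = n.+1 -> exists2 y', dist e x y' = n & e y' y.
Proof.
move=> cxy dxy; have := dist_walk cxy; rewrite dxy => /walk_of_lenS[y' wy' ey'y].
exists y' => //; apply/eqP; rewrite eqn_leq dist_le_walk //=.
by have := dist_edge (walk_of_len_connect wy') ey'y; rewrite dxy addn1 ltnS.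
Qed.

End Distance.

Lemma leq_mulD_lex t a b x y : a < t -> b < t ->
  (x * t + a <= y * t + b) = (x < y) || ((x == y) && (a <= b)).
Proof.
move=> a_lt b_lt; case: (ltngtP x y) => [lt_xy | lt_yx | ->] /=.
- have : x.+1 * t <= y * t by rewrite leq_mul2r lt_xy orbT.
  by rewrite mulSn; lia.
- have : y.+1 * t <= x * t by rewrite leq_mul2r lt_yx orbT.
  by rewrite mulSn; lia.
- by rewrite leq_add2l.
Qed.

Section BallMinor.
Variables (T : finType) (e : rel T).
Hypotheses (e_sym : symmetric e) (e_conn : connected_graph e).
Variables (t M : nat) (c : 'I_t -> T) (r : 'I_t -> nat).
Hypothesis r_le : forall l, r l <= M.

(* [excess l y] is d(c_l, y) - r_l shifted by M to stay in nat; [cell i] is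
   the Voronoi region of index i for this excess, ties going to the smaller
   index, which [key] encodes lexicographically. *)
Definition excess l y := dist e (c l) y + (M - r l).
Definition key l y := excess l y * t + l.
Definition cell i := [set y | [forall l, key i y <= key l y]].

Lemma key_leq i l y : (key i y <= key l y) =
  (excess i y < excess l y) || ((excess i y == excess l y) && (i <= l)).
Proof. exact: leq_mulD_lex. Qed.

Lemma cell_key_leq i l y : y \in cell i -> key i y <= key l y.
Proof. by rewrite inE => /forallP. Qed.

Lemma cell_excess_leq i l y : y \in cell i -> excess i y <= excess l y.
Proof.
by move/(cell_key_leq l); rewrite key_leq => /orP[/ltnW | /andP[/eqP -> _]].
Qed.

Lemma mem_cell_inj i j y : y \in cell i -> y \in cell j -> i = j.
Proof.
move=> /(cell_key_leq j) + /(cell_key_leq i); rewrite !key_leq => ? ?.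
by apply: val_inj => /=; lia.
Qed.

Lemma cell_cover (i0 : 'I_t) y : exists i, y \in cell i.
Proof.
have [i _ key_min] := @arg_minnP _ i0 xpredT (key^~ y) erefl.
by exists i; rewrite inE; apply/forallP => l; apply: key_min.
Qed.

Lemma excess_edge l y y' : e y' y -> excess l y <= (excess l y').+1.
Proof.
by move=> ey'y; have := dist_edge (e_conn (c l) y') ey'y; rewrite /excess; lia.
Qed.

Lemma cell_predecessor i y n : y \in cell i -> dist e (c i) y = n.+1 ->
  exists2 y', y' \in cell i /\ dist e (c i) y' = n & e y' y.
Proof.
move=> y_i dy; have [y' dy' ey'y] := dist_predecessor (e_conn (c i) y) dy.
have ex_i : (excess i y').+1 = excess i y by rewrite /excess dy dy'.
exists y' => //; split => //; rewrite inE; apply/forallP => l.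
have := cell_key_leq l y_i; have := excess_edge l ey'y.
by rewrite !key_leq -ex_i; lia.
Qed.

Lemma cell_connect i y : y \in cell i -> connect (induced e (cell i)) (c i) y.
Proof.
move: {2}(dist e (c i) y) (erefl (dist e (c i) y)) => n.
elim: n y => [|n IH] y dy y_i.
  by rewrite (dist0_eq (e_conn _ _) dy) connect0.
have [y' [y'_i dy'] ey'y] := cell_predecessor y_i dy.
apply: connect_trans (IH y' dy' y'_i) (connect1 _).
by rewrite /induced /= y'_i y_i ey'y.
Qed.

Hypothesis balls_separated : forall i j, i != j ->
  exists v, dist e (c i) v <= r i /\ r j < dist e (c j) v.

Lemma center_in_cell i : c i \in cell i.
Proof.
rewrite inE; apply/forallP => l; case: (eqVneq l i) => [-> // | l_neq_i].
rewrite key_leq /excess distxx.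
have [v [dv_i dv_l]] : exists v, dist e (c i) v <= r i /\ r l < dist e (c l) v.
  by apply: balls_separated; rewrite eq_sym.
have := dist_triangle (e_conn (c l) (c i)) (e_conn (c i) v).
have := r_le l; have := r_le i; lia.
Qed.

(* Follow a geodesic from y to c_j: the invariant keeps it inside cells i and j,
   and it cannot stay in cell i since c_j lies in cell j. *)
Lemma cells_adjacent_from i j y : i != j -> y \in cell i ->
  (forall l, l != i -> l != j -> excess j y < excess l y) ->
  exists a b, [/\ a \in cell i, b \in cell j & e a b].
Proof.
move=> i_neq_j; move: {2}(dist e (c j) y) (erefl (dist e (c j) y)) => n.
elim: n y => [|n IH] y dy y_i j_best.
  rewrite -(dist0_eq (e_conn _ _) dy) in y_i.
  by rewrite (mem_cell_inj y_i (center_in_cell j)) eqxx in i_neq_j.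
have [y' dy' ey'y] := dist_predecessor (e_conn (c j) y) dy.
have ex_j : (excess j y').+1 = excess j y by rewrite /excess dy dy'.
have j_best' l : l != i -> l != j -> excess j y' < excess l y'.
  by move=> li lj; have := j_best l li lj; have := excess_edge l ey'y; lia.
have [o y'_o] := cell_cover i y'.
case: (eqVneq o j) => [o_j | o_neq_j]; first by exists y, y'; rewrite -o_j e_sym.
case: (eqVneq o i) => [o_i | o_neq_i]; first by apply: IH dy' _ j_best'; rewrite -o_i.
by have := cell_excess_leq j y'_o; have := j_best' o o_neq_i o_neq_j; lia.
Qed.

Hypothesis balls_meet_alone : forall i j, i != j -> exists v,
  [/\ dist e (c i) v <= r i, dist e (c j) v <= r j &
      forall l, l != i -> l != j -> r l < dist e (c l) v].

Lemma cells_adjacent i j :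
  i != j -> exists a b, [/\ a \in cell i, b \in cell j & e a b].
Proof.
move=> i_neq_j; have [v [dv_i dv_j dv_l]] := balls_meet_alone i_neq_j.
have best k l : l != i -> l != j -> dist e (c k) v <= r k -> excess k v < excess l v.
  move=> li lj dv_k; have := dv_l l li lj; rewrite /excess.
  by have := r_le k; have := r_le l; lia.
have [o v_o] := cell_cover i v.
case: (eqVneq o i) => [o_i | o_neq_i].
  have v_i : v \in cell i by rewrite -o_i.
  by apply: (cells_adjacent_from i_neq_j v_i) => l li lj; apply: best.
case: (eqVneq o j) => [o_j | o_neq_j].
  have v_j : v \in cell j by rewrite -o_j.
  have j_neq_i : j != i by rewrite eq_sym.
  have [b [a [b_j a_i eba]]] := cells_adjacent_from j_neq_i v_j
    (fun l lj li => best i l li lj dv_i).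
  by exists a, b; rewrite e_sym.
by have := cell_excess_leq i v_o; have := best i o o_neq_i o_neq_j dv_i; lia.
Qed.

Lemma Kt_minor_of_balls : has_Kt_minor e t.
Proof.
exists cell; split.
- by move=> i; apply/set0Pn; exists (c i); apply: center_in_cell.
- move=> i x y x_i y_i.
  have sym_i : connect_sym (induced e (cell i)).
    by apply: sym_connect_sym => a b; rewrite /induced /= e_sym andbCA.
  by apply: connect_trans (cell_connect y_i); rewrite sym_i; apply: cell_connect.
- move=> i j i_neq_j; rewrite disjoint_subset; apply/subsetP => y y_i; rewrite inE.
  by apply: contra i_neq_j => y_j; rewrite (mem_cell_inj y_i y_j).
- exact: cells_adjacent.
Qed.

End BallMinor.

Section Shattering.
Variable U : finType.
Implicit Types (F : {set {set U}}) (A I S : {set U}).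

Definition shattered F : {set {set U}} :=
  [set A | [forall I in powerset A, [exists S in F, S :&: A == I]]].

Lemma shatteredP F A : reflect
  (forall I, I \subset A -> exists2 S, S \in F & S :&: A = I) (A \in shattered F).
Proof.
rewrite inE; apply: (iffP forall_inP) => [sh I | sh I].
  by rewrite -powersetE => /sh /exists_inP[S SF /eqP]; exists S.
by rewrite powersetE => /sh[S SF SA]; apply/exists_inP; exists S; rewrite ?SA.
Qed.

Lemma shattered_trace F A I : A \in shattered F -> I \subset A ->
  exists2 S, S \in F & {in A, forall x, (x \in S) = (x \in I)}.
Proof.
move=> /shatteredP sh /sh[S SF SA_I]; exists S => // x xA.
by rewrite -SA_I inE xA andbT.
Qed.

Lemma shattered_mono F1 F2 : F1 \subset F2 -> shattered F1 \subset shattered F2.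
Proof.
move=> /subsetP sF; apply/subsetP => A /shatteredP sh; apply/shatteredP => I sIA.
by have [S SF SA] := sh I sIA; exists S; rewrite ?sF.
Qed.

Lemma set0_shattered F : F != set0 -> set0 \in shattered F.
Proof.
case/set0Pn=> S SF; apply/shatteredP => I; rewrite subset0 => /eqP ->.
by exists S; rewrite ?setI0.
Qed.

Lemma shattered_notin F a b : {in F, forall S, (a \in S) = b} ->
  {in shattered F, forall A, a \notin A}.
Proof.
move=> aF A /shatteredP sh; apply/negP => aA; case: b aF => aF.
- have [S SF SA] := sh set0 (sub0set A).
  have : a \in S :&: A by rewrite inE aF ?aA.
  by rewrite SA inE.
- have [S SF SA] := sh A (subxx A).
  have : a \in S :&: A by rewrite SA.
  by rewrite inE aF.
Qed.

Section Split.
Variables (F : {set {set U}}) (a : U).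
Let Fin := F :&: [set S : {set U} | a \in S].
Let Fout := F :\: [set S : {set U} | a \in S].

Lemma setU1_shattered A :
  A \in shattered Fin -> A \in shattered Fout -> a |: A \in shattered F.
Proof.
move=> /shatteredP sh_in /shatteredP sh_out; apply/shatteredP => I sI.
case: (boolP (a \in I)) => aI.
- have sIaA : I :\ a \subset A by rewrite subDset.
  have [S] := sh_in (I :\ a) sIaA.
  rewrite !inE => /andP[SF aS] SA; exists S => //.
  rewrite -(setD1K aI) -SA; apply/setP => x; rewrite !inE.
  by case: eqVneq => [-> | _] //=; rewrite aS.
- have sIA : I \subset A.
    apply/subsetP => x xI; have := subsetP sI x xI; rewrite !inE.
    by case/orP => // /eqP xa; move: aI; rewrite -xa xI.
  have [S] := sh_out I sIA; rewrite !inE => /andP[aS SF] SA; exists S => //.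
  rewrite -SA; apply/setP => x; rewrite !inE.
  by case: eqVneq => [-> | _] //=; rewrite (negbTE aS).
Qed.

Lemma card_shattered_split :
  #|shattered Fin| + #|shattered Fout| <= #|shattered F|.
Proof.
set X := shattered Fin; set Y := shattered Fout.
have a_notin_X : {in X, forall A, a \notin A}.
  by apply: (@shattered_notin _ _ true) => S; rewrite !inE => /andP[].
have a_notin_Y : {in Y, forall A, a \notin A}.
  by apply: (@shattered_notin _ _ false) => S; rewrite !inE => /andP[/negbTE].
set Z := [set a |: A | A in X :&: Y].
have card_Z : #|Z| = #|X :&: Y|.
  apply: card_in_imset => A B /setIP[AX _] /setIP[BX _] eqAB.
  by rewrite -(setU1K (a_notin_X A AX)) eqAB setU1K ?a_notin_X.
have sub_XY : X :|: Y \subset shattered F.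
  by rewrite subUset !shattered_mono ?subsetIl ?subsetDl.
have sub_Z : Z \subset shattered F.
  by apply/subsetP => _ /imsetP[A /setIP[AX AY] ->]; apply: setU1_shattered.
have XY_Z : (X :|: Y) :&: Z = set0.
  apply/setP => B; rewrite in_setI in_set0; apply/andP => -[XY_B /imsetP[A _ eqB]].
  have : a \in B by rewrite eqB setU11.
  by case/setUP: XY_B => [/a_notin_X | /a_notin_Y] /negP.
have := subset_leq_card (_ : (X :|: Y) :|: Z \subset shattered F).
rewrite subUset sub_XY sub_Z => /(_ isT).
have := cardsUI (X :|: Y) Z; rewrite XY_Z cards0 addn0 card_Z.
by have := cardsUI X Y; lia.
Qed.

End Split.

Lemma card_le_shattered F : #|F| <= #|shattered F|.
Proof.
elim: {F}_.+1 {-2}F (ltnSn #|F|) => // n IH F ltFn.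
case: (leqP #|F| 1) => [F_le1 | /card_gt1P[S1 [S2 [S1F S2F neS]]]].
  case: (eqVneq F set0) => [-> | F_neq0]; first by rewrite cards0.
  apply: leq_trans F_le1 _; rewrite card_gt0; apply/set0Pn.
  by exists set0; apply: set0_shattered.
have [a aS] : exists a, (a \in S1) != (a \in S2).
  apply/existsP; apply: contraR neS => /existsPn same; apply/eqP/setP => x.
  by apply/eqP; rewrite -[_ == _]negbK same.
have [Sin [Sout [SinF SoutF aSin aSout]]] :
    exists Sin Sout, [/\ Sin \in F, Sout \in F, a \in Sin & a \notin Sout].
  case: (boolP (a \in S1)) => aS1; [exists S1, S2 | exists S2, S1];
    by split => //; move: aS aS1; case: (a \in S1); case: (a \in S2).
apply: leq_trans (card_shattered_split F a).
set Fin := F :&: _; set Fout := F :\: _.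
have in_gt0 : 0 < #|Fin|.
  by rewrite card_gt0; apply/set0Pn; exists Sin; rewrite !inE SinF.
have out_gt0 : 0 < #|Fout|.
  by rewrite card_gt0; apply/set0Pn; exists Sout; rewrite !inE SoutF andbT.
have split_F : #|Fin| + #|Fout| = #|F| := cardsID _ F.
by rewrite -split_F leq_add //; apply: IH; lia.
Qed.

End Shattering.

Lemma card_sets_leq (U : finType) p :
  #|[set A : {set U} | #|A| <= p]| <= #|U|.+1 ^ p.
Proof.
pose values (s : p.-tuple (option U)) := [set x | Some x \in s].
have small_values :
    [set A : {set U} | #|A| <= p] \subset [set values s | s : p.-tuple (option U)].
  apply/subsetP => A; rewrite inE => A_le.
  have size_s : size (map Some (enum A) ++ nseq (p - #|A|) None) == p.
    by rewrite size_cat size_map size_nseq -cardE subnKC.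
  apply/imsetP; exists (Tuple size_s) => //; apply/setP => x.
  by rewrite inE mem_cat mem_nseq andbF orbF (mem_map Some_inj) mem_enum.
apply: leq_trans (subset_leq_card small_values) _.
by rewrite -card_option -card_tuple leq_imset_card.
Qed.

Section BallPatterns.
Variables (T : finType) (e : rel T) (Q : finType) (center : Q -> T) (radius : Q -> nat).

Definition ball_pattern v : {set Q} := [set q | dist e (center q) v <= radius q].

Lemma Kt_minor_of_shattered (M t : nat) (A : {set Q}) :
  symmetric e -> connected_graph e -> (forall q, radius q <= M) ->
  A \in shattered [set ball_pattern v | v in T] -> t <= #|A| -> has_Kt_minor e t.
Proof.
move=> e_sym e_conn radius_le A_sh t_le.
pose q (i : 'I_t) : Q := enum_val (widen_ord t_le i).
have q_inj : injective q.
  by move=> i j /enum_val_inj/(congr1 val) /= eq_ij; apply: val_inj.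
have realize (J : {set 'I_t}) :
    exists v, forall l, (dist e (center (q l)) v <= radius (q l)) = (l \in J).
  have sJA : q @: J \subset A by apply/subsetP => _ /imsetP[l _ ->]; apply: enum_valP.
  have [_ /imsetP[v _ ->] trace] := shattered_trace A_sh sJA.
  exists v => l; have := trace (q l) (enum_valP _).
  by rewrite inE mem_imset.
apply: (@Kt_minor_of_balls _ _ e_sym e_conn _ M (center \o q) (radius \o q)) => /=.
- by move=> l; apply: radius_le.
- move=> i j i_neq_j; have [v ball_v] := realize [set i].
  by exists v; rewrite ltnNge !ball_v !inE eqxx eq_sym (negbTE i_neq_j).
- move=> i j i_neq_j; have [v ball_v] := realize [set i; j].
  exists v; rewrite !ball_v !inE !eqxx orbT; split => // l l_i l_j.
  by rewrite ltnNge ball_v !inE (negbTE l_i) (negbTE l_j).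
Qed.

End BallPatterns.

Lemma resolving_ball_pattern_inj (T : finType) (e : rel T) (R : {set T}) d :
  resolving e R -> (forall x y, dist e x y <= d) ->
  injective (ball_pattern e (fun q : {x | x \in R} * 'I_d => val q.1) (fun q => q.2)).
Proof.
move=> R_res dist_le u v eq_uv; apply/eqP; apply: contraT => /R_res[x xR neq_uv].
set P := ball_pattern _ _ _ in eq_uv.
have separate a b : dist e x a < dist e x b -> P a != P b.
  move=> lt_ab; have lt_d : dist e x a < d := leq_trans lt_ab (dist_le _ _).
  apply/negP => /eqP/setP/(_ (exist _ x xR, Ordinal lt_d)).
  by rewrite !inE /= leqnn leqNgt lt_ab.
case: (ltngtP (dist e x u) (dist e x v)) neq_uv => [lt_uv | lt_vu | //] _.
- by have := separate _ _ lt_uv; rewrite eq_uv eqxx.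
- by have := separate _ _ lt_vu; rewrite eq_uv eqxx.
Qed.

Theorem theorem5 (T : finType) (e : rel T) (t d k : nat) (R : {set T}) :
  simple_graph e ->
  ~ has_Kt_minor e t ->
  has_diameter e d ->
  resolving e R -> #|R| = k ->
  #|T| <= (d * k + 1) ^ (t - 1) + 1.
Proof.
move=> [e_sym _] no_minor [e_conn [dist_le _]] R_res card_R.
pose Q := ({x | x \in R} * 'I_d)%type.
pose P := [set ball_pattern e (fun q : Q => val q.1) (fun q => q.2) v | v in T].
have card_P : #|P| = #|T|.
  by rewrite card_imset ?cardsT //; apply: resolving_ball_pattern_inj.
have card_Q : #|{: Q}| = d * k.
  by rewrite card_prod card_sig card_ord mulnC -card_R; congr (_ * _); apply: eq_card.
have shattered_small : shattered P \subset [set A : {set Q} | #|A| <= t - 1].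
  apply/subsetP => A A_sh; rewrite inE leqNgt; apply/negP => lt_A; apply: no_minor.
  apply: (Kt_minor_of_shattered (M := d) e_sym e_conn _ A_sh).
    by move=> q; apply: ltnW.
  by case: (t) lt_A => [|t']; rewrite // subn1.
rewrite -card_P; apply: leq_trans (card_le_shattered P) _.
apply: leq_trans (subset_leq_card shattered_small) _.
apply: leq_trans (card_sets_leq _ _) _.
by rewrite card_Q !addn1 leqnSn.
Qed.
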